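(* For every matrix $A\in\mathbb{R}^{m\times n}$ and every $\epsilon>0$ there exists $t_0$ such that for every perturbed fictitious play system $(U,V)$ for $A$, $$\max V(t)-\min U(t)\le\epsilon t\quad\text{for all } t\ge t_0.$$
   Context: An iterative play system $(U,V)$ for $A\in\mathbb{R}^{m\times n}$ is a pair of sequences $U(0),U(1),\dots\in\mathbb{R}^n$ and $V(0),V(1),\dots\in\mathbb{R}^m$ such that $\min U(0)=\max V(0)$ and, for each $t$, $U(t+1)=U(t)+A_{i(t),*}$ and $V(t+1)=V(t)+A_{*,j(t)}$ for some indices $i(t)\in\{1,\dots,m\}$, $j(t)\in\{1,\dots,n\}$, where $A_{i,*}$ is the $i$th row and $A_{*,j}$ the $j$th column of $A$; $\max$, $\min$ of a vector denote its largest/smallest entry. Let $a=\max_{i,j}|A_{i,j}|$. A perturbed fictitious play system (PFP-system) is an iterative play system for which there exist vectors $E_V(t)\in\mathbb{R}^m$, $E_U(t)\in\mathbb{R}^n$ with $\|E_V(t)\|_\infty<a$ and $\|E_U(t)\|_\infty<a$ for each $t$, such that $i(t+1)\in\arg\max[V(t)+E_V(t)]$ and $j(t+1)\in\arg\min[U(t)+E_U(t)]$ for each $t$. *)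

From HB Require Import structures.
From mathcomp Require Import all_boot all_order all_algebra.
From mathcomp Require Import reals.
Set Implicit Arguments. Unset Strict Implicit. Unset Printing Implicit Defensive.
Import Order.TTheory GRing.Theory Num.Theory.
Local Open Scope ring_scope.

Definition vmax (R : realType) (k : nat) (v : 'I_k.+1 -> R) : R :=
  \big[Num.max/v ord0]_(i < k.+1) v i.
Definition vmin (R : realType) (k : nat) (v : 'I_k.+1 -> R) : R :=
  \big[Num.min/v ord0]_(i < k.+1) v i.

Definition is_argmax (R : realType) (k : nat) (w : 'I_k.+1 -> R) (i : 'I_k.+1) : Prop :=
  forall l, w l <= w i.
Definition is_argmin (R : realType) (k : nat) (w : 'I_k.+1 -> R) (j : 'I_k.+1) : Prop :=
  forall l, w j <= w l.

Definition maxabs (R : realType) (m n : nat) (A : 'M[R]_(m.+1, n.+1)) : R :=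
  \big[Num.max/0]_(i < m.+1) \big[Num.max/0]_(j < n.+1) `|A i j|.

Definition supnorm_lt (R : realType) (k : nat) (e : 'I_k.+1 -> R) (a : R) : Prop :=
  forall l, `|e l| < a.

Definition iterative_play_with (R : realType) (m n : nat) (A : 'M[R]_(m.+1, n.+1))
  (U : nat -> 'I_n.+1 -> R) (V : nat -> 'I_m.+1 -> R)
  (i : nat -> 'I_m.+1) (j : nat -> 'I_n.+1) : Prop :=
  vmin (U 0%N) = vmax (V 0%N) /\
  (forall t k, U t.+1 k = U t k + A (i t) k) /\
  (forall t l, V t.+1 l = V t l + A l (j t)).

Definition PFP_system (R : realType) (m n : nat) (A : 'M[R]_(m.+1, n.+1))
  (U : nat -> 'I_n.+1 -> R) (V : nat -> 'I_m.+1 -> R) : Prop :=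
  exists (i : nat -> 'I_m.+1) (j : nat -> 'I_n.+1),
    iterative_play_with A U V i j /\
    exists (EV : nat -> 'I_m.+1 -> R) (EU : nat -> 'I_n.+1 -> R),
      forall t,
        supnorm_lt (EV t) (maxabs A) /\ supnorm_lt (EU t) (maxabs A) /\
        is_argmax (fun l => V t l + EV t l) (i t.+1) /\
        is_argmin (fun k => U t k + EU t k) (j t.+1).

(* Robinson's argument for fictitious play, with the perturbations absorbed into
   approximate best replies: since |E| < a, each move is a (2a)-best reply.
   For a play restricted to a subgame I x J let gap(t) = max_I V(t) - min_J U(t).
   Summing the payoffs of the moves made during [s, e) shows that
   min_I V(e) - max_J U(e) <= gap(s).  We induct on |I| + |J|.  In a window of length
   L, either some row (or column) is never a near-best reply, and then the play on the
   smaller subgame controls the growth of the gap, or every row and column is a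
   near-best reply at some time of the window; then the spreads of V(e) and U(e) are
   O(aL), so gap(e) <= gap(s) + O(aL).  Long enough windows make the growth sublinear. *)

From HB Require Import structures.
From mathcomp Require Import all_boot all_order all_algebra.
From mathcomp Require Import reals lra zify.
From Stdlib Require Import Classical.
Import Order.TTheory GRing.Theory Num.Theory.
Local Open Scope ring_scope.
Set Implicit Arguments. Unset Strict Implicit. Unset Printing Implicit Defensive.

Lemma fin_eventually (T : finType) (P : T -> nat -> Prop) :
  (forall x, exists N, forall n, (N <= n)%N -> P x n) ->
  exists N, forall x n, (N <= n)%N -> P x n.
Proof.
move=> /fin_all_exists[N hN]; exists (\max_x N x)%N => x n le_n.
by apply: hN; apply: leq_trans le_n; exact: leq_bigmax.
Qed.

Lemma exists_nat_ge (R : archiRealDomainType) (x : R) :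
  exists N : nat, forall n, (N <= n)%N -> x <= n%:R.
Proof.
exists (Num.Def.archi_bound `|x|) => n le_n.
rewrite (le_trans (ler_norm x)) // ltW // (lt_le_trans (archi_boundP (normr_ge0 x))) //.
by rewrite ler_nat.
Qed.

Lemma exists_not_lt d (X : orderType d) (T : Type) (P : T -> Prop) (x y : T -> X) :
  ~ (forall t, P t -> (x t < y t)%O) -> exists2 t, P t & (y t <= x t)%O.
Proof.
move=> h; apply: NNPP => hn; apply: h => t Pt.
by rewrite ltNge; apply/negP => yx; apply: hn; exists t.
Qed.

Lemma windowed_growth (R : realDomainType) (g : nat -> R) (E L : nat) (K d : R) :
  0 <= d ->
  (forall t, (t <= L)%N -> (t <= E)%N -> g t - g 0%N <= K) ->
  (forall w, (w + L.+1 <= E)%N ->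
     g (w + L.+1)%N - g 0%N <= K \/ g (w + L.+1)%N - g w <= d * L.+1%:R) ->
  g E - g 0%N <= d * E%:R + K.
Proof.
move=> d0 short window; suff: forall t, (t <= E)%N -> g t - g 0%N <= d * t%:R + K by exact.
elim/ltn_ind => t IH tE; have dt : 0 <= d * t%:R by rewrite mulr_ge0.
have [tL|Lt] := leqP t L; first by have := short t tL tE; lra.
have [w def_t] : exists w, t = (w + L.+1)%N by exists (t - L.+1)%N; rewrite subnK.
subst t.
have [|step] := window w tE; first lra.
have := IH w ltac:(lia) ltac:(lia).
rewrite natrD mulrDr; lra.
Qed.

Section SetExtrema.
Variables (R : realType) (k : nat).
Implicit Types (I : {set 'I_k.+1}) (v : 'I_k.+1 -> R) (x : R).

(* Seeding the fold with a value of [v] on [I] makes it exact whenever [I] is nonempty. *)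
Definition setmax I v := \big[Num.max/v (odflt ord0 [pick l in I])]_(l in I) v l.
Definition setmin I v := \big[Num.min/v (odflt ord0 [pick l in I])]_(l in I) v l.

Lemma pick_in I : I != set0 -> odflt ord0 [pick l in I] \in I.
Proof. by case/set0Pn => l lI; case: pickP => // /(_ l); rewrite lI. Qed.

Lemma setmax_ub I v l : l \in I -> v l <= setmax I v.
Proof. exact: le_bigmax_cond. Qed.

Lemma setmin_lb I v l : l \in I -> setmin I v <= v l.
Proof. exact: bigmin_le_cond. Qed.

Lemma setmax_le I v x : I != set0 -> (forall l, l \in I -> v l <= x) -> setmax I v <= x.
Proof. by move=> I0 vx; rewrite bigmax_le // vx // pick_in. Qed.

Lemma setmin_ge I v x : I != set0 -> (forall l, l \in I -> x <= v l) -> x <= setmin I v.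
Proof. by move=> I0 xv; rewrite le_bigmin // xv // pick_in. Qed.

Lemma setmax_attained I v : I != set0 -> exists2 l, l \in I & setmax I v = v l.
Proof.
move=> I0; have [l lI lmax] := arg_maxP v (pick_in I0).
by exists l => //; apply: le_anti; rewrite setmax_ub // setmax_le.
Qed.

Lemma setmin_attained I v : I != set0 -> exists2 l, l \in I & setmin I v = v l.
Proof.
move=> I0; have [l lI lmin] := arg_minP v (pick_in I0).
by exists l => //; apply: le_anti; rewrite setmin_lb // setmin_ge.
Qed.

Lemma setmax_setD1 I v l : l \in I -> v l < setmax I v ->
  I :\ l != set0 /\ setmax (I :\ l) v = setmax I v.
Proof.
move=> lI vl_lt; have I0 : I != set0 by apply/set0Pn; exists l.
have [l' l'I vl'] := setmax_attained v I0.
have l'Il : l' \in I :\ l.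
  by rewrite !inE l'I andbT; apply: contraTneq vl_lt => <-; rewrite vl' ltxx.
have I'0 : I :\ l != set0 by apply/set0Pn; exists l'.
split=> //; apply: le_anti; rewrite vl' setmax_ub // setmax_le // => l'' /setD1P[_ l''I].
by rewrite -vl' setmax_ub.
Qed.

Lemma setmin_setD1 I v l : l \in I -> setmin I v < v l ->
  I :\ l != set0 /\ setmin (I :\ l) v = setmin I v.
Proof.
move=> lI vl_gt; have I0 : I != set0 by apply/set0Pn; exists l.
have [l' l'I vl'] := setmin_attained v I0.
have l'Il : l' \in I :\ l.
  by rewrite !inE l'I andbT; apply: contraTneq vl_gt => <-; rewrite vl' ltxx.
have I'0 : I :\ l != set0 by apply/set0Pn; exists l'.
split=> //; apply: le_anti; rewrite vl' setmin_lb // setmin_ge // => l'' /setD1P[_ l''I].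
by rewrite -vl' setmin_lb.
Qed.

Lemma vmax_setT v : vmax v = setmax [set: 'I_k.+1] v.
Proof.
have T0 : [set: 'I_k.+1] != set0 by apply/set0Pn; exists ord0.
apply: le_anti; rewrite setmax_le ?bigmax_le ?setmax_ub ?in_setT // => l _.
  by rewrite setmax_ub ?in_setT.
exact: le_bigmax.
Qed.

Lemma vmin_setT v : vmin v = setmin [set: 'I_k.+1] v.
Proof.
have T0 : [set: 'I_k.+1] != set0 by apply/set0Pn; exists ord0.
apply: le_anti; rewrite setmin_ge ?le_bigmin ?setmin_lb ?in_setT // => l _.
  by rewrite setmin_lb ?in_setT.
exact: bigmin_le.
Qed.

End SetExtrema.

Section Play.
Variables (R : realType) (m n : nat) (A : 'M[R]_(m.+1, n.+1)) (a c : R).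
Hypotheses (hA : forall l k, `|A l k| <= a) (c_ge0 : 0 <= c).
Implicit Types (I : {set 'I_m.+1}) (J : {set 'I_n.+1}).

Record play_on I J (U : nat -> 'I_n.+1 -> R) (V : nat -> 'I_m.+1 -> R)
    (i : nat -> 'I_m.+1) (j : nat -> 'I_n.+1) (s e : nat) : Prop := PlayOn {
  play_row : forall t, (s <= t < e)%N -> i t \in I;
  play_col : forall t, (s <= t < e)%N -> j t \in J;
  play_U : forall t k, (s <= t < e)%N -> U t.+1 k = U t k + A (i t) k;
  play_V : forall t l, (s <= t < e)%N -> V t.+1 l = V t l + A l (j t);
  play_row_reply : forall t l, (s <= t)%N -> (t.+1 < e)%N -> l \in I ->
    V t l - c <= V t (i t.+1);
  play_col_reply : forall t k, (s <= t)%N -> (t.+1 < e)%N -> k \in J ->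
    U t (j t.+1) <= U t k + c
}.

Definition gap I J (U : nat -> 'I_n.+1 -> R) (V : nat -> 'I_m.+1 -> R) t :=
  setmax I (V t) - setmin J (U t).

Definition gap_growth_le I J (eps : R) (T : nat) : Prop :=
  forall U V i j s, play_on I J U V i j s (s + T) ->
    gap I J U V (s + T) - gap I J U V s <= eps * T%:R.

Let a_ge0 : 0 <= a := le_trans (normr_ge0 _) (hA ord0 ord0).

Section OnePlay.
Variables (U : nat -> 'I_n.+1 -> R) (V : nat -> 'I_m.+1 -> R).
Variables (i : nat -> 'I_m.+1) (j : nat -> 'I_n.+1).

Lemma play_on_window I J s e s' e' : play_on I J U V i j s e ->
  (s <= s')%N -> (e' <= e)%N -> play_on I J U V i j s' e'.
Proof.
move=> [hr hc hU hV hrr hcr] ss' e'e.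
have win t : (s' <= t < e')%N -> (s <= t < e)%N by move=> /andP[? ?]; apply/andP; lia.
split=> [t /win/hr|t /win/hc|t k /win/hU|t l /win/hV|t l st te|t k st te] //.
- by apply: hrr; lia.
- by apply: hcr; lia.
Qed.

Lemma play_on_sub I J I' J' s e : play_on I J U V i j s e ->
  I' \subset I -> J' \subset J ->
  (forall t, (s <= t < e)%N -> i t \in I' /\ j t \in J') -> play_on I' J' U V i j s e.
Proof.
move=> [hr hc hU hV hrr hcr] /subsetP II' /subsetP JJ' hin.
split=> [t /hin[]|t /hin[]|||t l st te /II'|t k st te /JJ'] //.
- exact: hrr.
- exact: hcr.
Qed.

Lemma play_V_sum I J s e t t' l : play_on I J U V i j s e ->
  (s <= t <= t')%N -> (t' <= e)%N -> V t' l = V t l + \sum_(t <= x < t') A l (j x).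
Proof.
move=> P /andP[st tt'] t'e; rewrite (telescope_sumr_eq (V^~ l)) //; first by rewrite addrC subrK.
move=> x /andP[tx xt']; rewrite (play_V P); first by rewrite addrC addKr.
by apply/andP; lia.
Qed.

Lemma play_U_sum I J s e t t' k : play_on I J U V i j s e ->
  (s <= t <= t')%N -> (t' <= e)%N -> U t' k = U t k + \sum_(t <= x < t') A (i x) k.
Proof.
move=> P /andP[st tt'] t'e; rewrite (telescope_sumr_eq (U^~ k)) //; first by rewrite addrC subrK.
move=> x /andP[tx xt']; rewrite (play_U P); first by rewrite addrC addKr.
by apply/andP; lia.
Qed.

Lemma play_V_dist I J s e t t' l : play_on I J U V i j s e ->
  (s <= t <= t')%N -> (t' <= e)%N -> `|V t' l - V t l| <= a * (t' - t)%:R.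
Proof.
move=> P stt' t'e; rewrite (play_V_sum l P stt' t'e) addrC addKr.
apply: le_trans (ler_norm_sum _ _ _) _.
by rewrite mulr_natr -sumr_const_nat; apply: ler_sum_nat => x _; exact: hA.
Qed.

Lemma play_U_dist I J s e t t' k : play_on I J U V i j s e ->
  (s <= t <= t')%N -> (t' <= e)%N -> `|U t' k - U t k| <= a * (t' - t)%:R.
Proof.
move=> P stt' t'e; rewrite (play_U_sum k P stt' t'e) addrC addKr.
apply: le_trans (ler_norm_sum _ _ _) _.
by rewrite mulr_natr -sumr_const_nat; apply: ler_sum_nat => x _; exact: hA.
Qed.

Lemma play_setmax_V_le I J s e t t' : play_on I J U V i j s e -> I != set0 ->
  (s <= t <= t')%N -> (t' <= e)%N -> setmax I (V t') <= setmax I (V t) + a * (t' - t)%:R.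
Proof.
move=> P I0 stt' t'e; apply: setmax_le => // l lI.
have := play_V_dist l P stt' t'e; have := setmax_ub (V t) lI.
rewrite ler_norml => ? /andP[? ?]; lra.
Qed.

Lemma play_setmin_U_ge I J s e t t' : play_on I J U V i j s e -> J != set0 ->
  (s <= t <= t')%N -> (t' <= e)%N -> setmin J (U t) - a * (t' - t)%:R <= setmin J (U t').
Proof.
move=> P J0 stt' t'e; apply: setmin_ge => // k kJ.
have := play_U_dist k P stt' t'e; have := setmin_lb (U t) kJ.
rewrite ler_norml => ? /andP[? ?]; lra.
Qed.

Lemma play_gap_le I J s e t t' : play_on I J U V i j s e -> I != set0 -> J != set0 ->
  (s <= t <= t')%N -> (t' <= e)%N -> gap I J U V t' <= gap I J U V t + 2 * a * (t' - t)%:R.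
Proof.
move=> P I0 J0 stt' t'e; rewrite /gap.
have := play_setmax_V_le P I0 stt' t'e; have := play_setmin_U_ge P J0 stt' t'e; lra.
Qed.

Lemma play_V_spread I J s e w : play_on I J U V i j s e -> I != set0 -> (s <= w <= e)%N ->
  (forall l, l \in I -> exists2 t, (w <= t <= e)%N & setmax I (V t) - c <= V t l) ->
  setmax I (V e) - setmin I (V e) <= 2 * a * (e - w)%:R + c.
Proof.
move=> P I0 /andP[sw we] eligible.
suff: setmax I (V e) - (2 * a * (e - w)%:R + c) <= setmin I (V e) by lra.
apply: setmin_ge => // l /eligible[t /andP[wt te] hl].
have ste : (s <= t <= e)%N by rewrite (leq_trans sw wt).
have : a * (e - t)%:R <= a * (e - w)%:R by rewrite ler_wpM2l // ler_nat; lia.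
have := play_V_dist l P ste (leqnn e); have := play_setmax_V_le P I0 ste (leqnn e).
rewrite ler_norml => ? /andP[? ?] ?; lra.
Qed.

Lemma play_U_spread I J s e w : play_on I J U V i j s e -> J != set0 -> (s <= w <= e)%N ->
  (forall k, k \in J -> exists2 t, (w <= t <= e)%N & U t k <= setmin J (U t) + c) ->
  setmax J (U e) - setmin J (U e) <= 2 * a * (e - w)%:R + c.
Proof.
move=> P J0 /andP[sw we] eligible.
suff: setmax J (U e) <= setmin J (U e) + (2 * a * (e - w)%:R + c) by lra.
apply: setmax_le => // k /eligible[t /andP[wt te] hk].
have ste : (s <= t <= e)%N by rewrite (leq_trans sw wt).
have : a * (e - t)%:R <= a * (e - w)%:R by rewrite ler_wpM2l // ler_nat; lia.
have := play_U_dist k P ste (leqnn e); have := play_setmin_U_ge P J0 ste (leqnn e).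
rewrite ler_norml => ? /andP[? ?] ?; lra.
Qed.

(* Each side gains the double sum of [A (i x) (j y)] over the window, which cancels. *)
Lemma play_cross_sum I J s e : play_on I J U V i j s e -> (s <= e)%N ->
  \sum_(s <= t < e) (V e (i t) - U e (j t)) = \sum_(s <= t < e) (V s (i t) - U s (j t)).
Proof.
move=> P se; have sse : (s <= s <= e)%N by rewrite leqnn.
under eq_bigr do rewrite (play_V_sum _ P sse (leqnn e)) (play_U_sum _ P sse (leqnn e)).
under eq_bigr do rewrite opprD addrACA.
by rewrite big_split /= [X in _ + X]sumrB exchange_big /= subrr addr0.
Qed.

Lemma play_setmin_sub_setmax_le_gap I J s e : play_on I J U V i j s e -> (s < e)%N ->
  setmin I (V e) - setmax J (U e) <= gap I J U V s.
Proof.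
move=> P se; rewrite -(ler_pMn2r (_ : 0 < e - s)%N) ?subn_gt0 // -!sumr_const_nat.
apply: (@le_trans _ _ (\sum_(s <= t < e) (V e (i t) - U e (j t)))).
  apply: ler_sum_nat => t st; apply: lerB.
    exact: setmin_lb (play_row P st).
  exact: setmax_ub (play_col P st).
rewrite (play_cross_sum P (ltnW se)); apply: ler_sum_nat => t st; apply: lerB.
  exact: setmax_ub (play_row P st).
exact: setmin_lb (play_col P st).
Qed.

Lemma play_on_remove_row I J s e w l : play_on I J U V i j s e -> (s <= w)%N -> l \in I ->
  (forall t, (w <= t <= e)%N -> V t l < setmax I (V t) - c) ->
  play_on (I :\ l) J U V i j w.+1 e.
Proof.
move=> P sw lI dominated; have I0 : I != set0 by apply/set0Pn; exists l.
have Pw := play_on_window P (leqW sw) (leqnn e).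
apply: (play_on_sub Pw (subD1set I l) (subxx J)) => -[//|t] wte.
split; [|exact: play_col Pw _ wte].
rewrite !inE (play_row Pw wte) andbT; have /andP[wt te] := wte.
apply: contraTneq (dominated t _) => [itl|]; last lia.
have st : (s <= t)%N by lia.
have : setmax I (V t) <= V t l + c.
  by apply: setmax_le => // l' /(play_row_reply P st te); rewrite itl; lra.
lra.
Qed.

Lemma play_on_remove_col I J s e w k : play_on I J U V i j s e -> (s <= w)%N -> k \in J ->
  (forall t, (w <= t <= e)%N -> setmin J (U t) + c < U t k) ->
  play_on I (J :\ k) U V i j w.+1 e.
Proof.
move=> P sw kJ dominated; have J0 : J != set0 by apply/set0Pn; exists k.
have Pw := play_on_window P (leqW sw) (leqnn e).
apply: (play_on_sub Pw (subxx I) (subD1set J k)) => -[//|t] wte.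
split; [exact: play_row Pw _ wte|].
rewrite !inE (play_col Pw wte) andbT; have /andP[wt te] := wte.
apply: contraTneq (dominated t _) => [jtk|]; last lia.
have st : (s <= t)%N by lia.
have : U t k - c <= setmin J (U t).
  by apply: setmin_ge => // k' /(play_col_reply P st te); rewrite jtk; lra.
lra.
Qed.

Lemma gap_growth_dominated_row I J w L l eps :
  play_on I J U V i j w (w + L.+1) -> J != set0 -> l \in I ->
  (forall t, (w <= t <= w + L.+1)%N -> V t l < setmax I (V t) - c) ->
  (I :\ l != set0 -> gap_growth_le (I :\ l) J eps L) ->
  gap I J U V (w + L.+1) - gap I J U V w <= 2 * a + eps * L%:R.
Proof.
move=> P J0 lI dominated growth; have I0 : I != set0 by apply/set0Pn; exists l.
have same_max t : (w <= t <= w + L.+1)%N ->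
    I :\ l != set0 /\ setmax (I :\ l) (V t) = setmax I (V t).
  by move=> /dominated dom_t; apply: (setmax_setD1 lI); have := c_ge0; lra.
have [I'0 max_e] := same_max (w + L.+1)%N ltac:(lia).
have [_ max_w1] := same_max w.+1 ltac:(lia).
have step : gap I J U V w.+1 <= gap I J U V w + 2 * a * (w.+1 - w)%:R.
  by apply: (play_gap_le P) => //; rewrite ?leqnn ?leqnSn //; lia.
have := growth I'0 U V i j w.+1; rewrite addSnnS.
move=> /(_ (play_on_remove_row P (leqnn w) lI dominated)).
move: step; rewrite /gap max_e max_w1 subSnn.
lra.
Qed.

Lemma gap_growth_dominated_col I J w L k eps :
  play_on I J U V i j w (w + L.+1) -> I != set0 -> k \in J ->
  (forall t, (w <= t <= w + L.+1)%N -> setmin J (U t) + c < U t k) ->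
  (J :\ k != set0 -> gap_growth_le I (J :\ k) eps L) ->
  gap I J U V (w + L.+1) - gap I J U V w <= 2 * a + eps * L%:R.
Proof.
move=> P I0 kJ dominated growth; have J0 : J != set0 by apply/set0Pn; exists k.
have same_min t : (w <= t <= w + L.+1)%N ->
    J :\ k != set0 /\ setmin (J :\ k) (U t) = setmin J (U t).
  by move=> /dominated dom_t; apply: (setmin_setD1 kJ); have := c_ge0; lra.
have [J'0 min_e] := same_min (w + L.+1)%N ltac:(lia).
have [_ min_w1] := same_min w.+1 ltac:(lia).
have step : gap I J U V w.+1 <= gap I J U V w + 2 * a * (w.+1 - w)%:R.
  by apply: (play_gap_le P) => //; rewrite ?leqnn ?leqnSn //; lia.
have := growth J'0 U V i j w.+1; rewrite addSnnS.
move=> /(_ (play_on_remove_col P (leqnn w) kJ dominated)).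
move: step; rewrite /gap min_e min_w1 subSnn.
lra.
Qed.

Lemma gap_window_dichotomy I J s w L eps :
  play_on I J U V i j s (w + L.+1) -> I != set0 -> J != set0 -> (s <= w)%N ->
  (forall l, l \in I -> I :\ l != set0 -> gap_growth_le (I :\ l) J eps L) ->
  (forall k, k \in J -> J :\ k != set0 -> gap_growth_le I (J :\ k) eps L) ->
  gap I J U V (w + L.+1) - gap I J U V s <= 4 * a * L.+1%:R + 2 * c \/
  gap I J U V (w + L.+1) - gap I J U V w <= 2 * a + eps * L%:R.
Proof.
move=> P I0 J0 sw rows cols; have Pw := play_on_window P sw (leqnn _).
have [[l lI dom]|no_row] := classic (exists2 l, l \in I &
    forall t, (w <= t <= w + L.+1)%N -> V t l < setmax I (V t) - c).
  by right; apply: (gap_growth_dominated_row Pw J0 lI dom); exact: rows.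
have [[k kJ dom]|no_col] := classic (exists2 k, k \in J &
    forall t, (w <= t <= w + L.+1)%N -> setmin J (U t) + c < U t k).
  by right; apply: (gap_growth_dominated_col Pw I0 kJ dom); exact: cols.
left; have swe : (s <= w <= w + L.+1)%N by rewrite sw leq_addr.
have rows_eligible l : l \in I ->
    exists2 t, (w <= t <= w + L.+1)%N & setmax I (V t) - c <= V t l.
  by move=> lI; apply: exists_not_lt => dom; apply: no_row; exists l.
have cols_eligible k : k \in J ->
    exists2 t, (w <= t <= w + L.+1)%N & U t k <= setmin J (U t) + c.
  by move=> kJ; apply: exists_not_lt => dom; apply: no_col; exists k.
have se : (s < w + L.+1)%N by lia.
have := play_setmin_sub_setmax_le_gap P se.
have := play_V_spread P I0 swe rows_eligible; have := play_U_spread P J0 swe cols_eligible.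
rewrite /gap addKn; lra.
Qed.

End OnePlay.

Lemma gap_growth_from_subgames I J eps T1 : I != set0 -> J != set0 -> 0 < eps ->
  (forall T, (T1 <= T)%N ->
    (forall l, l \in I -> I :\ l != set0 -> gap_growth_le (I :\ l) J (eps / 2) T) /\
    (forall k, k \in J -> J :\ k != set0 -> gap_growth_le I (J :\ k) (eps / 2) T)) ->
  exists T0, forall T, (T0 <= T)%N -> gap_growth_le I J eps T.
Proof.
move=> I0 J0 eps_gt0 subgames.
(* Windows of length [L.+1] beyond [T1] with [2 * a <= eps / 4 * L.+1]: a window either
   stays within [K] of the start or grows the gap at rate at most [3 / 4 * eps]. *)
have [N1 hN1] := exists_nat_ge (8 * a / eps).
set L := maxn T1 N1; have [rows cols] := subgames L (leq_maxl _ _).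
have a_small : 2 * a <= eps / 4 * L.+1%:R.
  have : 8 * a / eps <= L.+1%:R by apply: hN1; lia.
  by rewrite ler_pdivrMr //; lra.
set K := 4 * a * L.+1%:R + 2 * c.
have [N2 hN2] := exists_nat_ge (4 * K / eps).
exists N2 => T le_N2T U V i j s P.
have K_small : K <= eps / 4 * T%:R by move: (hN2 T le_N2T); rewrite ler_pdivrMr //; lra.
suff: gap I J U V (s + T) - gap I J U V (s + 0) <= 3 / 4 * eps * T%:R + K.
  by rewrite addn0; lra.
apply: (windowed_growth (g := fun t => gap I J U V (s + t)) (L := L)); first lra.
- move=> t tL tT; rewrite addn0.
  have : gap I J U V (s + t) <= gap I J U V s + 2 * a * (s + t - s)%:R.
    by apply: (play_gap_le P); rewrite ?leqnn ?leq_addr ?leq_add2l.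
  have : a * t%:R <= a * L.+1%:R by rewrite ler_wpM2l // ler_nat; lia.
  have := mulr_ge0 a_ge0 (ler0n R L.+1); have := c_ge0.
  rewrite addKn /K; lra.
- move=> w wLT; rewrite addn0 addnA.
  have wT : (s + w + L.+1 <= s + T)%N by rewrite -addnA leq_add2l.
  have Pw := play_on_window P (leqnn s) wT.
  have [|] := gap_window_dichotomy Pw I0 J0 (leq_addr w s) rows cols; first by left.
  have : eps / 2 * L%:R <= eps / 2 * L.+1%:R by rewrite ler_wpM2l ?ler_nat //; lra.
  by right; lra.
Qed.

Lemma gap_growth_eventually N I J eps : (#|I| + #|J| <= N)%N -> I != set0 -> J != set0 ->
  0 < eps -> exists T0, forall T, (T0 <= T)%N -> gap_growth_le I J eps T.
Proof.
elim: N I J eps => [|N IH] I J eps size_IJ I0 J0 eps_gt0.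
  by move: I0; rewrite -card_gt0; lia.
have eps2_gt0 : 0 < eps / 2 by rewrite divr_gt0.
have rows l : exists T1, forall T, (T1 <= T)%N ->
    l \in I -> I :\ l != set0 -> gap_growth_le (I :\ l) J (eps / 2) T.
  have [lI|lNI] := boolP (l \in I); last by exists 0%N => T _ lI; case/negP: lNI.
  have [I'0|I'N0] := boolP (I :\ l != set0); last by exists 0%N => T _ _ I'0; case/negP: I'N0.
  have size' : (#|I :\ l| + #|J| <= N)%N by move: size_IJ; rewrite (cardsD1 l I) lI; lia.
  by have [T1 h] := IH _ _ _ size' I'0 J0 eps2_gt0; exists T1 => T /h growth _ _.
have cols k : exists T1, forall T, (T1 <= T)%N ->
    k \in J -> J :\ k != set0 -> gap_growth_le I (J :\ k) (eps / 2) T.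
  have [kJ|kNJ] := boolP (k \in J); last by exists 0%N => T _ kJ; case/negP: kNJ.
  have [J'0|J'N0] := boolP (J :\ k != set0); last by exists 0%N => T _ _ J'0; case/negP: J'N0.
  have size' : (#|I| + #|J :\ k| <= N)%N by move: size_IJ; rewrite (cardsD1 k J) kJ; lia.
  by have [T1 h] := IH _ _ _ size' I0 J'0 eps2_gt0; exists T1 => T /h growth _ _.
have [Tr hr] := fin_eventually rows; have [Tc hc] := fin_eventually cols.
apply: (@gap_growth_from_subgames _ _ _ (maxn Tr Tc)) => // T le_T.
by split=> [l|k]; [apply: hr | apply: hc]; lia.
Qed.

End Play.

Lemma maxabs_ub (R : realType) m n (A : 'M[R]_(m.+1, n.+1)) l k : `|A l k| <= maxabs A.
Proof. by apply: (bigmax_sup l) => //; apply: (bigmax_sup k). Qed.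

Lemma perturbed_argmax_reply (R : realType) k (v ev : 'I_k.+1 -> R) (a : R) i0 l :
  supnorm_lt ev a -> is_argmax (fun l => v l + ev l) i0 -> v l - 2 * a <= v i0.
Proof.
move=> ev_small /(_ l); have := ev_small l; have := ev_small i0.
rewrite !ltr_norml => /andP[? ?] /andP[? ?]; lra.
Qed.

Lemma perturbed_argmin_reply (R : realType) k (u eu : 'I_k.+1 -> R) (a : R) j0 l :
  supnorm_lt eu a -> is_argmin (fun l => u l + eu l) j0 -> u j0 <= u l + 2 * a.
Proof.
move=> eu_small /(_ l); have := eu_small l; have := eu_small j0.
rewrite !ltr_norml => /andP[? ?] /andP[? ?]; lra.
Qed.

Lemma PFP_play_on (R : realType) m n (A : 'M[R]_(m.+1, n.+1)) U V : PFP_system A U V ->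
  exists i j, vmin (U 0%N) = vmax (V 0%N) /\
    forall e, play_on A (2 * maxabs A) setT setT U V i j 0 e.
Proof.
move=> [i [j [[init [hU hV]] [EV [EU hE]]]]]; exists i, j; split=> // e.
split=> [t _|t _|t k _|t l _|t l _ _ _|t k _ _ _]; rewrite ?in_setT //.
- by have [EV_small [_ [imax _]]] := hE t; exact: perturbed_argmax_reply EV_small imax.
- by have [_ [EU_small [_ jmin]]] := hE t; exact: perturbed_argmin_reply EU_small jmin.
Qed.

Theorem lemma4 (R : realType) (m n : nat) (A : 'M[R]_(m.+1, n.+1)) (eps : R) :
  0 < eps ->
  exists t0 : nat,
    forall (U : nat -> 'I_n.+1 -> R) (V : nat -> 'I_m.+1 -> R),
      PFP_system A U V ->
      forall t : nat, (t0 <= t)%N ->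
        vmax (V t) - vmin (U t) <= eps * t%:R.
Proof.
move=> eps_gt0; have hA := maxabs_ub A.
have c_ge0 : 0 <= 2 * maxabs A by rewrite mulr_ge0 // (le_trans _ (hA ord0 ord0)).
have setT0 k : [set: 'I_k.+1] != set0 by apply/set0Pn; exists ord0.
have [T0 growth] := gap_growth_eventually hA c_ge0 (leqnn _) (setT0 _) (setT0 _) eps_gt0.
exists T0 => U V /PFP_play_on[i [j [init play]]] t le_T0t.
have := growth t le_T0t U V i j 0%N (play t).
by rewrite /gap add0n -!vmax_setT -!vmin_setT init subrr subr0.
Qed.
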